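(* Let $\alpha\in(0,\pi/2]$ and define the polynomial $$\begin{aligned} p_1(d)&=-32\sin^6\alpha\,d^{12}+256\sin^6\alpha\,d^{10}-1184\sin^6\alpha\,d^8\\ &\quad-96\sin^3\alpha\big(-40\alpha+9\sin\alpha+20\sin2\alpha+7\sin3\alpha-30\alpha\cos\alpha\big)d^6\\ &\quad+96\sin^3\alpha\big(-160\alpha+99\sin\alpha+80\sin2\alpha+7\sin3\alpha-120\alpha\cos\alpha\big)d^4\\ &\quad+13440(\alpha-\sin\alpha)\sin^5\alpha\,\csc^2\Big(\frac{\alpha}{2}\Big)d^2\\ &\quad-1800\big(6\alpha+8\alpha\cos\alpha-2\sin\alpha(3\cos\alpha+4)\big)^2, \end{aligned}$$ and let $p(x)=p_1(\sqrt{x})$, a polynomial of degree $6$ in $x$. Let $d_{max}=\csc(\alpha/2)\sqrt{5(\alpha\csc\alpha-1)}$. Let $q(x)=x^6-8x^5+37x^4-134x^3+284x^2-280x+100$; its real zeros are $1$ (a double zero) and two further zeros $x_3<x_4$ (numerically $x_3\approx2.1842$, $x_4\approx3.2872$). Then $p$ has at most four positive zeros on $(0,d_{max}^2)$. Moreover, if with $y_0=0$, $y_1=1$, $y_2=x_3$, $y_3=x_4$, $y_4=d_{max}^2$ the values $p(y_0),p(y_1),p(y_2),p(y_3),p(y_4)$ are of alternating signs, then $p$ has precisely four positive zeros.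
   Context: Here $\csc=1/\sin$. *)

From Stdlib Require Import Reals Lra List.
Open Scope R_scope.

Definition csc (t : R) : R := / sin t.

Definition p1 (a d : R) : R :=
  - 32 * sin a ^ 6 * d ^ 12 + 256 * sin a ^ 6 * d ^ 10 - 1184 * sin a ^ 6 * d ^ 8
  - 96 * sin a ^ 3 * (- 40 * a + 9 * sin a + 20 * sin (2 * a) + 7 * sin (3 * a)
                      - 30 * a * cos a) * d ^ 6
  + 96 * sin a ^ 3 * (- 160 * a + 99 * sin a + 80 * sin (2 * a) + 7 * sin (3 * a)
                      - 120 * a * cos a) * d ^ 4
  + 13440 * (a - sin a) * sin a ^ 5 * (csc (a / 2)) ^ 2 * d ^ 2
  - 1800 * (6 * a + 8 * a * cos a - 2 * sin a * (3 * cos a + 4)) ^ 2.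

(* p(x) = p_1(sqrt x), written out as the degree-6 polynomial in x = d^2
   (so it is also defined, as a polynomial, for x < 0). *)
Definition p (a x : R) : R :=
  - 32 * sin a ^ 6 * x ^ 6 + 256 * sin a ^ 6 * x ^ 5 - 1184 * sin a ^ 6 * x ^ 4
  - 96 * sin a ^ 3 * (- 40 * a + 9 * sin a + 20 * sin (2 * a) + 7 * sin (3 * a)
                      - 30 * a * cos a) * x ^ 3
  + 96 * sin a ^ 3 * (- 160 * a + 99 * sin a + 80 * sin (2 * a) + 7 * sin (3 * a)
                      - 120 * a * cos a) * x ^ 2
  + 13440 * (a - sin a) * sin a ^ 5 * (csc (a / 2)) ^ 2 * x
  - 1800 * (6 * a + 8 * a * cos a - 2 * sin a * (3 * cos a + 4)) ^ 2.

Definition dmax (a : R) : R := csc (a / 2) * sqrt (5 * (a * csc a - 1)).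

Definition q (x : R) : R :=
  x ^ 6 - 8 * x ^ 5 + 37 * x ^ 4 - 134 * x ^ 3 + 284 * x ^ 2 - 280 * x + 100.

Definition zero_in (a x : R) : Prop := 0 < x < dmax a ^ 2 /\ p a x = 0.

From Coquelicot Require Import Coquelicot.
From Stdlib Require Import Reals Lra Lia List Sorted Permutation Mergesort Orders.
Open Scope R_scope.

(* The fourth derivative of p is -sin^6 a (11520 (x - 4/3)^2 + 7936), which never
   vanishes; by Rolle's theorem applied four times, p has at most four real zeros.
   The zeros x3, x4 of q other than 1 lie in (1, 10/3), since q = (x - 1)^2 r with
   r > 0 off that interval, and d_max^2 >= 10/3 amounts to sin a (4 - cos a) <= 3 a.
   Hence 0 < 1 < x3 < x4 < d_max^2, the alternating signs give a zero of p in each of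
   the four gaps, and by the first part these are all of its zeros. *)

Module RLeBool <: TotalLeBool.
  Definition t := R.
  Definition leb (x y : R) : bool := if Rle_dec x y then true else false.
  Lemma leb_spec x y : leb x y = true <-> x <= y.
  Proof. unfold leb; destruct (Rle_dec x y); split; easy. Qed.
  Theorem leb_total x y : leb x y = true \/ leb y x = true.
  Proof. rewrite !leb_spec; lra. Qed.
End RLeBool.

Module RSort := Sort RLeBool.

Lemma StronglySorted_Rlt_of_leb (l : list R) :
  StronglySorted (fun x y => RLeBool.leb x y = true) l -> NoDup l -> StronglySorted Rlt l.
Proof.
  induction l as [|x l IH]; intros Hs Hnd; [constructor|].
  apply StronglySorted_inv in Hs as [Hs Hx]. inversion Hnd as [|? ? Hxl Hnd']; subst.
  constructor; [exact (IH Hs Hnd')|].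
  rewrite Forall_forall in *. intros y Hy.
  assert (x <> y) by (intros ->; exact (Hxl Hy)).
  specialize (Hx y Hy). apply RLeBool.leb_spec in Hx. lra.
Qed.

Lemma NoDup_sorted_perm (l : list R) :
  NoDup l -> exists s, StronglySorted Rlt s /\ Permutation l s.
Proof.
  intros Hnd. exists (RSort.sort l).
  assert (Hperm := RSort.Permuted_sort l).
  split; [|exact Hperm].
  apply StronglySorted_Rlt_of_leb; [|exact (Permutation_NoDup Hperm Hnd)].
  apply RSort.StronglySorted_sort.
  intros x y z Hxy Hyz. apply RLeBool.leb_spec.
  apply RLeBool.leb_spec in Hxy, Hyz. lra.
Qed.

Lemma rolle_sorted_zeros (f f' : R -> R) (x0 : R) (l : list R) :
  (forall x, derivable_pt_lim f x (f' x)) ->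
  StronglySorted Rlt (x0 :: l) -> Forall (fun x => f x = 0) (x0 :: l) ->
  exists l', StronglySorted Rlt l' /\ length l' = length l /\
    Forall (fun x => x0 < x /\ f' x = 0) l'.
Proof.
  intros f_derive; revert x0; induction l as [|x1 l IH]; intros x0 Hs Hz.
  { exists nil; repeat constructor. }
  apply StronglySorted_inv in Hs as [Hs Hx0]. inversion Hx0 as [|? ? H01 _]; subst.
  inversion Hz as [|? ? Hfx0 Hz']; subst. inversion Hz' as [|? ? Hfx1 _]; subst.
  destruct (IH x1 Hs Hz') as [l' [Hs' [Hlen Hz'']]].
  destruct (MVT_cor2 f f' x0 x1 H01 (fun c _ => f_derive c)) as [c [Hc [Hc0 Hc1]]].
  assert (Hf'c : f' c = 0).
  { rewrite Hfx0, Hfx1 in Hc.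
    destruct (Rmult_integral (f' c) (x1 - x0)) as [|]; lra. }
  exists (c :: l'); split; [|split].
  - constructor; [exact Hs'|].
    eapply Forall_impl; [|exact Hz'']. intros x [Hx _]. lra.
  - simpl; congruence.
  - constructor; [lra|].
    eapply Forall_impl; [|exact Hz'']. intros x [Hx Hf']. split; [lra|exact Hf'].
Qed.

Lemma sorted_zeros_le_of_derive_n_neq0 (f : nat -> R -> R) (n : nat) (l : list R) :
  (forall k x, (k < n)%nat -> derivable_pt_lim (f k) x (f (S k) x)) ->
  (forall x, f n x <> 0) ->
  StronglySorted Rlt l -> Forall (fun x => f 0%nat x = 0) l -> (length l <= n)%nat.
Proof.
  revert f l; induction n as [|n IH]; intros f [|x0 l] Hd Hn Hs Hz; simpl; try lia.
  - inversion Hz as [|? ? Hx0 _]. destruct (Hn x0 Hx0).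
  - destruct (rolle_sorted_zeros (f 0%nat) (f 1%nat) x0 l) as [l' [Hs' [Hlen Hz']]];
      [intros x; apply Hd; lia|exact Hs|exact Hz|].
    rewrite <- Hlen. apply le_n_S, (IH (fun k => f (S k))); [| |exact Hs'|].
    + intros k x Hk. apply Hd. lia.
    + exact Hn.
    + eapply Forall_impl; [|exact Hz']. intros x [_ Hx]. exact Hx.
Qed.

Lemma zeros_le_of_derive_n_neq0 (f : nat -> R -> R) (n : nat) (l : list R) :
  (forall k x, (k < n)%nat -> derivable_pt_lim (f k) x (f (S k) x)) ->
  (forall x, f n x <> 0) ->
  NoDup l -> Forall (fun x => f 0%nat x = 0) l -> (length l <= n)%nat.
Proof.
  intros Hd Hn Hnd Hz.
  destruct (NoDup_sorted_perm l Hnd) as [s [Hs Hperm]].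
  rewrite (Permutation_length Hperm).
  apply (sorted_zeros_le_of_derive_n_neq0 f); [exact Hd|exact Hn|exact Hs|].
  exact (Permutation_Forall Hperm Hz).
Qed.

Definition poly (c : nat -> R) (N : nat) (x : R) : R := sum_f_R0 (fun k => c k * x ^ k) N.

Definition deriv_coef (c : nat -> R) (k : nat) : R := INR (S k) * c (S k).

Lemma poly_zeros_le (c : nat -> R) (N n : nat) (l : list R) :
  (n <= N)%nat -> (forall x, poly (Nat.iter n deriv_coef c) (N - n) x <> 0) ->
  NoDup l -> Forall (fun x => poly c N x = 0) l -> (length l <= n)%nat.
Proof.
  intros HnN Hn Hnd Hz.
  apply (zeros_le_of_derive_n_neq0 (fun k => poly (Nat.iter k deriv_coef c) (N - k)));
    [|exact Hn|exact Hnd|now rewrite Nat.sub_0_r].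
  intros k x Hk. replace (N - S k)%nat with (pred (N - k)) by lia.
  apply derivable_pt_lim_fs. lia.
Qed.

Lemma IVT_strict (f : R -> R) (x y : R) :
  continuity f -> x < y -> f x * f y < 0 -> exists z, x < z < y /\ f z = 0.
Proof.
  intros Hc Hxy Hsign.
  destruct (IVT_cor f x y Hc (Rlt_le _ _ Hxy) (Rlt_le _ _ Hsign)) as [z [[Hxz Hzy] Hz]].
  exists z; split; [split|exact Hz].
  - destruct (Rle_lt_or_eq_dec x z Hxz) as [ | <-]; [assumption|]. rewrite Hz in Hsign. lra.
  - destruct (Rle_lt_or_eq_dec z y Hzy) as [ | ->]; [assumption|]. rewrite Hz in Hsign. lra.
Qed.

Lemma increasing_chain_le (y : nat -> R) (n : nat) :
  (forall i, (i < n)%nat -> y i < y (S i)) -> y 0%nat <= y n.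
Proof.
  induction n as [|n IH]; intros Hy; [lra|].
  assert (y 0%nat <= y n) by (apply IH; intros i Hi; apply Hy; lia).
  assert (y n < y (S n)) by (apply Hy; lia). lra.
Qed.

Lemma sign_changes_zeros (f : R -> R) (y : nat -> R) (n : nat) :
  continuity f ->
  (forall i, (i < n)%nat -> y i < y (S i)) ->
  (forall i, (i < n)%nat -> f (y i) * f (y (S i)) < 0) ->
  exists l, NoDup l /\ length l = n /\ Forall (fun x => y 0%nat < x < y n /\ f x = 0) l.
Proof.
  intros Hc. induction n as [|n IH]; intros Hy Hsign.
  { exists nil. repeat constructor. }
  destruct IH as [l [Hnd [Hlen Hz]]];
    [intros i Hi; apply Hy; lia|intros i Hi; apply Hsign; lia|].
  assert (Hchain : y 0%nat <= y n) by (apply increasing_chain_le; intros i Hi; apply Hy; lia).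
  destruct (IVT_strict f (y n) (y (S n))) as [z [Hzn Hz0]];
    [exact Hc|apply Hy; lia|apply Hsign; lia|].
  rewrite Forall_forall in Hz.
  exists (z :: l); split; [|split].
  - constructor; [|exact Hnd]. intros Hzl. specialize (Hz z Hzl). lra.
  - simpl; congruence.
  - constructor; [split; [lra|exact Hz0]|].
    apply Forall_forall. intros x Hx. specialize (Hz x Hx). split; [lra|apply Hz].
Qed.

Lemma In_of_NoDup_maximal (A : Type) (eq_dec : forall u v : A, {u = v} + {u <> v})
  (P : A -> Prop) (l : list A) (x : A) :
  (forall l', NoDup l' -> Forall P l' -> (length l' <= length l)%nat) ->
  NoDup l -> Forall P l -> P x -> In x l.
Proof.
  intros Hmax Hnd Hl Hx. destruct (In_dec eq_dec x l) as [|Hxl]; [assumption|].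
  specialize (Hmax (x :: l) (NoDup_cons x Hxl Hnd) (Forall_cons x Hx Hl)).
  simpl in Hmax. lia.
Qed.

Lemma sin_mul_4_sub_cos_le (a : R) : 0 <= a -> sin a * (4 - cos a) <= 3 * a.
Proof.
  intros Ha. destruct (Rle_lt_or_eq_dec 0 a Ha) as [Ha0 | <-].
  2: { rewrite sin_0. lra. }
  assert (Hd : forall t, derivable_pt_lim (fun t => 3 * t - sin t * (4 - cos t)) t
                                          (2 * (1 - cos t) ^ 2)).
  { intros t. apply is_derive_Reals. auto_derive; [exact I|].
    apply Rminus_diag_uniq. transitivity (1 - (Rsqr (sin t) + Rsqr (cos t))).
    - unfold Rsqr. ring.
    - rewrite sin2_cos2. ring. }
  destruct (MVT_cor2 _ _ 0 a Ha0 (fun t _ => Hd t)) as [c [Hc _]].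
  rewrite sin_0, cos_0 in Hc.
  assert (0 <= 2 * (1 - cos c) ^ 2 * (a - 0)).
  { apply Rmult_le_pos; [|lra]. apply Rmult_le_pos; [lra|apply pow2_ge_0]. }
  lra.
Qed.

Lemma dmax_sqr_ge (a : R) : 0 < a < PI -> 10 / 3 <= dmax a ^ 2.
Proof.
  intros [Ha0 HaPI].
  assert (hs : 0 < sin a) by (apply sin_gt_0; lra).
  assert (hh : 0 < sin (a / 2)) by (apply sin_gt_0; lra).
  assert (hcos : cos a = 1 - 2 * sin (a / 2) ^ 2).
  { replace a with (2 * (a / 2)) at 1 by field. rewrite cos_2a_sin. ring. }
  assert (Hdmax : dmax a ^ 2 = 5 * (a - sin a) / (sin a * sin (a / 2) ^ 2)).
  { unfold dmax, csc. rewrite Rpow_mult_distr, pow2_sqrt.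
    - field. lra.
    - replace (5 * (a * / sin a - 1)) with (5 * (a - sin a) / sin a) by (field; lra).
      assert (hsa := sin_lt_x a Ha0).
      apply Rmult_le_pos; [lra|left; apply Rinv_0_lt_compat, hs]. }
  assert (E : dmax a ^ 2 - 10 / 3
              = 5 * (3 * a - sin a * (4 - cos a)) / (3 * sin a * sin (a / 2) ^ 2)).
  { rewrite Hdmax, hcos. field. lra. }
  assert (0 <= 5 * (3 * a - sin a * (4 - cos a)) / (3 * sin a * sin (a / 2) ^ 2)).
  { assert (hbound := sin_mul_4_sub_cos_le a (Rlt_le _ _ Ha0)).
    apply Rmult_le_pos; [lra|]. left. apply Rinv_0_lt_compat.
    assert (0 < sin (a / 2) ^ 2) by (apply pow_lt, hh). nra. }
  lra.
Qed.

Lemma q_zero_bounds (x : R) : q x = 0 -> x <> 1 -> 1 < x < 10 / 3.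
Proof.
  intros Hq Hx1.
  assert (Hfac : q x = (x - 1) ^ 2 * (x ^ 4 - 6 * x ^ 3 + 24 * x ^ 2 - 80 * x + 100))
    by (unfold q; ring).
  assert (Hr : x ^ 4 - 6 * x ^ 3 + 24 * x ^ 2 - 80 * x + 100 = 0).
  { rewrite Hfac in Hq. apply Rmult_integral in Hq as [H|H]; [|exact H].
    exfalso. apply (pow_nonzero (x - 1) 2); [lra|exact H]. }
  split; apply Rnot_le_lt; intros Hx.
  - assert (Hlow : x ^ 4 - 6 * x ^ 3 + 24 * x ^ 2 - 80 * x + 100
                   = 4 + 24 * (2 - x) + (2 - x) ^ 2 * ((1 - x) ^ 2 + 11)) by ring.
    assert (0 <= (2 - x) ^ 2 * ((1 - x) ^ 2 + 11))
      by (apply Rmult_le_pos; [apply pow2_ge_0|pose proof (pow2_ge_0 (1 - x)); lra]).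
    lra.
  - set (t := x - 10 / 3).
    assert (Hhigh : x ^ 4 - 6 * x ^ 3 + 24 * x ^ 2 - 80 * x + 100
                    = 100 / 81 + 760 / 27 * t + 92 / 3 * t ^ 2 + 22 / 3 * t ^ 3 + t ^ 4)
      by (unfold t; field).
    assert (0 <= t) by (unfold t; lra).
    assert (0 <= t ^ 2) by (apply pow_le; lra).
    assert (0 <= t ^ 3) by (apply pow_le; lra).
    assert (0 <= t ^ 4) by (apply pow_le; lra).
    lra.
Qed.

Definition p_coef (a : R) (k : nat) : R :=
  match k with
  | 0 => - 1800 * (6 * a + 8 * a * cos a - 2 * sin a * (3 * cos a + 4)) ^ 2
  | 1 => 13440 * (a - sin a) * sin a ^ 5 * (csc (a / 2)) ^ 2
  | 2 => 96 * sin a ^ 3 * (- 160 * a + 99 * sin a + 80 * sin (2 * a) + 7 * sin (3 * a)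
                          - 120 * a * cos a)
  | 3 => - 96 * sin a ^ 3 * (- 40 * a + 9 * sin a + 20 * sin (2 * a) + 7 * sin (3 * a)
                            - 30 * a * cos a)
  | 4 => - 1184 * sin a ^ 6
  | 5 => 256 * sin a ^ 6
  | 6 => - 32 * sin a ^ 6
  | _ => 0
  end.

Lemma p_poly (a x : R) : p a x = poly (p_coef a) 6 x.
Proof. unfold p, poly; simpl. ring. Qed.

Lemma p_derive4_lt0 (a x : R) :
  0 < sin a -> poly (Nat.iter 4 deriv_coef (p_coef a)) 2 x < 0.
Proof.
  intros hs.
  assert (E : poly (Nat.iter 4 deriv_coef (p_coef a)) 2 x
              = - sin a ^ 6 * (11520 * (x - 4 / 3) ^ 2 + 7936)).
  { unfold poly, deriv_coef; simpl. field. }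
  rewrite E. assert (0 < sin a ^ 6) by (apply pow_lt, hs).
  assert (0 <= (x - 4 / 3) ^ 2) by apply pow2_ge_0. nra.
Qed.

Lemma p_zeros_le (a : R) (l : list R) :
  0 < sin a -> NoDup l -> Forall (fun x => p a x = 0) l -> (length l <= 4)%nat.
Proof.
  intros hs Hnd Hz. apply (poly_zeros_le (p_coef a) 6 4); [lia| |exact Hnd|].
  - intros x. apply Rlt_not_eq, p_derive4_lt0, hs.
  - eapply Forall_impl; [|exact Hz]. intros x Hx. now rewrite <- p_poly.
Qed.

Lemma p_continuous (a : R) : continuity (p a).
Proof. unfold p. reg. Qed.

Theorem lemma5 (a x3 x4 : R) (ha : 0 < a <= PI / 2)
  (hx3 : q x3 = 0) (hx4 : q x4 = 0) (hx3n1 : x3 <> 1) (hx4n1 : x4 <> 1)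
  (hx34 : x3 < x4) :
  (forall l : list R, NoDup l -> Forall (zero_in a) l -> (length l <= 4)%nat) /\
  (let y := fun i : nat =>
       match i with 0%nat => 0 | 1%nat => 1 | 2%nat => x3 | 3%nat => x4
                  | _ => dmax a ^ 2 end in
   (forall i : nat, (i < 4)%nat -> p a (y i) * p a (y (S i)) < 0) ->
   exists l : list R, NoDup l /\ length l = 4%nat /\
     forall x, In x l <-> zero_in a x).
Proof.
  assert (hPI := PI_RGT_0).
  assert (hs : 0 < sin a) by (apply sin_gt_0; lra).
  assert (Hle : forall l, NoDup l -> Forall (zero_in a) l -> (length l <= 4)%nat).
  { intros l Hnd Hz. apply (p_zeros_le a l hs Hnd).
    eapply Forall_impl; [|exact Hz]. intros x [_ Hx]. exact Hx. }
  split; [exact Hle|]. intros y Hsign.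
  destruct (q_zero_bounds x3 hx3 hx3n1), (q_zero_bounds x4 hx4 hx4n1).
  assert (dmax_ge := dmax_sqr_ge a ltac:(lra)).
  assert (Hy : forall i, (i < 4)%nat -> y i < y (S i)).
  { intros [|[|[|[|i]]]] Hi; simpl; lra || lia. }
  destruct (sign_changes_zeros (p a) y 4 (p_continuous a) Hy Hsign) as [l [Hnd [Hlen Hz]]].
  exists l; split; [exact Hnd|split; [exact Hlen|]]. intros x; split.
  - intros Hx. exact (proj1 (Forall_forall _ _) Hz x Hx).
  - apply (In_of_NoDup_maximal R Req_dec_T); [rewrite Hlen; exact Hle|exact Hnd|exact Hz].
Qed.
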